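(* Let $\nu(x)=\sum_{k=0}^\infty\nu_kL_k(x)$ on $I=(-1,1)$, and for $m,n\ge2$ let $a^{(1)}_{m,n}:=\int_{-1}^1\nu(x)\,D\eta_m(x)\,D\eta_n(x)\,dx$. If there exist $\eta>0$ and a constant $C_\eta>0$ depending only on $\eta$ such that $|\nu_k|\le C_\eta e^{-\eta k}$ for all $k\ge0$, then $$|a^{(1)}_{m,n}|\le C e^{-\eta|n-m|}\qquad\forall\, n,m\ge2,$$ where $C$ is a constant depending only on $\eta$.
   Context: $I=(-1,1)$, $D=d/dx$. $L_k$ denotes the Legendre polynomial of degree $k$ normalized by $L_k(1)=1$, so $\int_I L_kL_m\,dx=\frac{2}{2k+1}\delta_{km}$. The Babuška–Shen basis is $\eta_k(x)=\sqrt{k-1/2}\int_x^1L_{k-1}(s)\,ds=\frac{1}{\sqrt{4k-2}}(L_{k-2}(x)-L_k(x))$, $k\ge2$; it satisfies $D\eta_k=-\sqrt{k-1/2}\,L_{k-1}$. *)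

From Stdlib Require Import Reals.
From Coquelicot Require Import Coquelicot.
Open Scope R_scope.

(* leg_pair n x = (L_n x, L_{n+1} x) via Bonnet's recurrence
   (k+1) L_{k+1} = (2k+1) x L_k - k L_{k-1}, L_0 = 1, L_1 = x. *)
Fixpoint leg_pair (n : nat) (x : R) : R * R :=
  match n with
  | O => (1, x)
  | S n' => let (p, q) := leg_pair n' x in
            (q, ((2 * INR n' + 3) * x * q - (INR n' + 1) * p) / (INR n' + 2))
  end.

Definition Legendre (k : nat) (x : R) : R := fst (leg_pair k x).

Definition eta_BS (k : nat) (x : R) : R :=
  sqrt (INR k - / 2) * RInt (Legendre (k - 1)) x 1.

Definition nu_fun (c : nat -> R) (x : R) : R :=
  Series (fun k => c k * Legendre k x).

Definition a1 (c : nat -> R) (m n : nat) : R :=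
  RInt (fun x => nu_fun c x * Derive (eta_BS m) x * Derive (eta_BS n) x) (-1) 1.

(* Since D eta_m = - sqrt (m - 1/2) L_(m-1), the coefficient a_(m,n) is the integral of nu
   against the orthonormal Legendre polynomials P_(m-1) P_(n-1).  For m <= n and k < n - m,
   L_k L_(m-1) has degree < n - 1 and is orthogonal to L_(n-1), so only the tail
   sum_(k >= n-m) nu_k L_k of the series contributes.  As |L_k| <= 1 on [-1, 1], this tail is
   bounded by C_eta e^(-eta (n-m)) / (1 - e^(-eta)), and |P_(m-1) P_(n-1)| <= (P_(m-1)^2 +
   P_(n-1)^2) / 2 integrates to 1.  Orthogonality is derived from Legendre's equation and the
   three-term recurrence defining L_k. *)

From Stdlib Require Import Reals Lra Lia Psatz.
From Coquelicot Require Import Coquelicot.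
Open Scope R_scope.

Lemma nat_ind2 (P : nat -> Prop) :
  P 0%nat -> P 1%nat -> (forall n, P n -> P (S n) -> P (S (S n))) -> forall n, P n.
Proof.
  intros H0 H1 HS n. assert (P n /\ P (S n)) as [Hn _]; [|exact Hn].
  induction n as [|n [IH IHS]]; auto.
Qed.

Lemma Legendre_0 x : Legendre 0 x = 1.
Proof. reflexivity. Qed.

Lemma Legendre_1 x : Legendre 1 x = x.
Proof. reflexivity. Qed.

Lemma Legendre_SS n x : Legendre (S (S n)) x =
  ((2 * INR n + 3) * x * Legendre (S n) x - (INR n + 1) * Legendre n x) / (INR n + 2).
Proof.
  unfold Legendre; simpl. destruct (leg_pair n x) as [p q]. reflexivity.
Qed.

Lemma Legendre_Bonnet n x : (INR n + 2) * Legendre (S (S n)) x =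
  (2 * INR n + 3) * x * Legendre (S n) x - (INR n + 1) * Legendre n x.
Proof. rewrite Legendre_SS. field. pose proof (pos_INR n). lra. Qed.

Fixpoint Legendre_deriv (n : nat) (x : R) : R :=
  match n with
  | O => 0
  | S k => x * Legendre_deriv k x + INR (S k) * Legendre k x
  end.

Lemma Legendre_deriv_rec n x :
  x * Legendre_deriv (S n) x - Legendre_deriv n x = (INR n + 1) * Legendre (S n) x /\
  (1 - x^2) * Legendre_deriv (S n) x = (INR n + 1) * (Legendre n x - x * Legendre (S n) x).
Proof.
  induction n as [|n [_ IH]].
  - simpl. unfold Legendre; simpl. split; ring.
  - pose proof (Legendre_Bonnet n x) as HB.
    change (Legendre_deriv (S (S n)) x)
      with (x * Legendre_deriv (S n) x + INR (S (S n)) * Legendre (S n) x).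
    rewrite !S_INR in *.
    set (D1 := Legendre_deriv (S n) x) in *. set (D0 := Legendre_deriv n x) in *.
    set (L2 := Legendre (S (S n)) x) in *. set (L1 := Legendre (S n) x) in *.
    set (L0 := Legendre n x) in *.
    clearbody D1 D0 L2 L1 L0.
    split.
    + replace (x * (x * D1 + (INR n + 1 + 1) * L1) - D1)
        with (- ((1 - x^2) * D1) + (INR n + 1 + 1) * x * L1) by ring.
      rewrite IH. lra.
    + replace ((1 - x^2) * (x * D1 + (INR n + 1 + 1) * L1))
        with (x * ((1 - x^2) * D1) + (1 - x^2) * (INR n + 1 + 1) * L1) by ring.
      rewrite IH.
      replace (INR n + 1 + 1) with (INR n + 2) by ring.
      replace ((INR n + 2) * (L1 - x * L2)) with ((INR n + 2) * L1 - x * ((INR n + 2) * L2)) by ring.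
      rewrite HB. ring.
Qed.

Lemma is_derive_Legendre n x : is_derive (Legendre n) x (Legendre_deriv n x).
Proof.
  revert x. induction n as [| |n IH0 IH1] using nat_ind2; intro x.
  - apply (is_derive_ext (fun _ => 1)); [reflexivity|].
    auto_derive; [exact I | reflexivity].
  - apply (is_derive_ext (fun y => y)); [reflexivity|].
    simpl. auto_derive; [exact I | unfold Legendre; simpl; ring].
  - apply (is_derive_ext (fun y => ((2 * INR n + 3) * y * Legendre (S n) y
                                    - (INR n + 1) * Legendre n y) / (INR n + 2))).
    { intro y. symmetry. apply Legendre_SS. }
    pose proof (IH0 x) as H0. pose proof (IH1 x) as H1.
    auto_derive.
    + repeat split; eexists; eassumption.
    + replace (Derive (fun y => Legendre n y) x) with (Legendre_deriv n x)
        by (symmetry; apply is_derive_unique; exact H0).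
      replace (Derive (fun y => Legendre (S n) y) x) with (Legendre_deriv (S n) x)
        by (symmetry; apply is_derive_unique; exact H1).
      destruct (Legendre_deriv_rec n x) as [E _].
      change (Legendre_deriv (S (S n)) x)
        with (x * Legendre_deriv (S n) x + INR (S (S n)) * Legendre (S n) x).
      rewrite !S_INR in *. pose proof (pos_INR n).
      replace (Legendre_deriv n x)
        with (x * Legendre_deriv (S n) x - (INR n + 1) * Legendre (S n) x) by lra.
      field. lra.
Qed.

Definition Cts (f : R -> R) : Prop := forall x, continuous f x.

Lemma Cts_const c : Cts (fun _ => c).
Proof. intro. apply continuous_const. Qed.
Lemma Cts_id : Cts (fun x => x).
Proof. intro. apply continuous_id. Qed.
Lemma Cts_plus f g : Cts f -> Cts g -> Cts (fun x => f x + g x).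
Proof. intros Hf Hg x. apply (continuous_plus f g); auto. Qed.
Lemma Cts_minus f g : Cts f -> Cts g -> Cts (fun x => f x - g x).
Proof. intros Hf Hg x. apply (continuous_minus f g); auto. Qed.
Lemma Cts_mult f g : Cts f -> Cts g -> Cts (fun x => f x * g x).
Proof. intros Hf Hg x. apply (continuous_mult f g); auto. Qed.
Lemma Cts_pow j : Cts (fun x => x ^ j).
Proof. induction j; simpl; [apply Cts_const | apply Cts_mult; auto using Cts_id]. Qed.
Lemma Cts_Legendre n : Cts (Legendre n).
Proof. intro x. apply (ex_derive_continuous (Legendre n)). eexists. apply is_derive_Legendre. Qed.
Lemma Cts_Legendre_deriv n : Cts (Legendre_deriv n).
Proof.
  induction n; simpl; [apply Cts_const|].
  apply Cts_plus; apply Cts_mult; auto using Cts_id, Cts_const, Cts_Legendre.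
Qed.

Ltac cts :=
  lazymatch goal with
  | |- forall x, continuous ?f x => change (Cts f); cts
  | |- Cts (fun x => @?f x - @?g x) => apply (Cts_minus f g); cts
  | |- Cts (fun x => @?f x + @?g x) => apply (Cts_plus f g); cts
  | |- Cts (fun x => @?f x * @?g x) => apply (Cts_mult f g); cts
  | |- Cts (fun x => x ^ _) => apply Cts_pow
  | |- Cts (fun x => x) => apply Cts_id
  | |- Cts (fun x => Legendre _ x) => apply Cts_Legendre
  | |- Cts (fun x => Legendre_deriv _ x) => apply Cts_Legendre_deriv
  | |- Cts (Legendre _) => apply Cts_Legendre
  | |- Cts (Legendre_deriv _) => apply Cts_Legendre_deriv
  | |- Cts (fun _ => ?c) => apply Cts_const
  | |- Cts _ => assumption
  end.

Lemma ex_RInt_Cts f a b : Cts f -> ex_RInt f a b.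
Proof. intros Hf. apply (ex_RInt_continuous (V := R_CompleteNormedModule)). intros; apply Hf. Qed.

Lemma RInt_plus_Cts f g a b : Cts f -> Cts g ->
  RInt (fun x => f x + g x) a b = RInt f a b + RInt g a b.
Proof. intros Hf Hg. exact (RInt_plus f g a b (ex_RInt_Cts f a b Hf) (ex_RInt_Cts g a b Hg)). Qed.
Lemma RInt_minus_Cts f g a b : Cts f -> Cts g ->
  RInt (fun x => f x - g x) a b = RInt f a b - RInt g a b.
Proof. intros Hf Hg. exact (RInt_minus f g a b (ex_RInt_Cts f a b Hf) (ex_RInt_Cts g a b Hg)). Qed.
Lemma RInt_scal_Cts c f a b : Cts f -> RInt (fun x => c * f x) a b = c * RInt f a b.
Proof. intros Hf. exact (RInt_scal f a b c (ex_RInt_Cts f a b Hf)). Qed.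

Lemma RInt_ext_R (f g : R -> R) a b :
  (forall x, Rmin a b < x < Rmax a b -> f x = g x) -> RInt f a b = RInt g a b.
Proof. apply RInt_ext. Qed.

Lemma is_derive_Legendre_flux b x :
  is_derive (fun y => (1 - y^2) * Legendre_deriv b y) x
            (- (INR b * (INR b + 1)) * Legendre b x).
Proof.
  destruct b as [|n].
  - replace (- (INR 0 * (INR 0 + 1)) * Legendre 0 x) with 0 by (simpl; ring).
    apply (is_derive_ext (fun _ => 0)); [intro; simpl; ring | apply (is_derive_const (V := R_NormedModule))].
  - apply (is_derive_ext (fun y => (INR n + 1) * (Legendre n y - y * Legendre (S n) y))).
    { intro y. symmetry. apply Legendre_deriv_rec. }
    pose proof (is_derive_Legendre n x) as H0. pose proof (is_derive_Legendre (S n) x) as H1.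
    auto_derive.
    + repeat split; eexists; eassumption.
    + replace (Derive (fun y => Legendre n y) x) with (Legendre_deriv n x)
        by (symmetry; apply is_derive_unique; exact H0).
      replace (Derive (fun y => Legendre (S n) y) x) with (Legendre_deriv (S n) x)
        by (symmetry; apply is_derive_unique; exact H1).
      destruct (Legendre_deriv_rec n x) as [E _]. rewrite S_INR. nra.
Qed.

Lemma RInt_Legendre_deriv_weighted a b :
  RInt (fun x => Legendre_deriv a x * ((1 - x^2) * Legendre_deriv b x)) (-1) 1
  = INR b * (INR b + 1) * RInt (fun x => Legendre a x * Legendre b x) (-1) 1.
Proof.
  set (F := fun x => Legendre a x * ((1 - x^2) * Legendre_deriv b x)).
  assert (HF : is_RInt (fun x => Legendre_deriv a x * ((1 - x^2) * Legendre_deriv b x)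
                                 - INR b * (INR b + 1) * (Legendre a x * Legendre b x))
                       (-1) 1 (minus (F 1) (F (-1)))).
  { apply (is_RInt_derive (V := R_CompleteNormedModule)).
    - intros x _. unfold F.
      pose proof (is_derive_mult _ _ x _ _ (is_derive_Legendre a x)
                    (is_derive_Legendre_flux b x) ltac:(intros; apply Rmult_comm)) as H.
      replace (_ - _) with (plus (mult (Legendre_deriv a x) ((1 - x^2) * Legendre_deriv b x))
               (mult (Legendre a x) (- (INR b * (INR b + 1)) * Legendre b x))); [exact H|].
      unfold plus, mult; simpl; ring.
    - intros x _. revert x. cts. }
  apply (is_RInt_unique (V := R_CompleteNormedModule)) in HF.
  replace (minus (F 1) (F (-1))) with 0 in HF by (unfold F, minus, plus, opp; simpl; ring).
  rewrite RInt_minus_Cts, RInt_scal_Cts in HF by cts. lra.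
Qed.

Lemma Legendre_orthogonal a b : a <> b ->
  RInt (fun x => Legendre a x * Legendre b x) (-1) 1 = 0.
Proof.
  intros Hab.
  pose proof (RInt_Legendre_deriv_weighted a b) as Hab'.
  pose proof (RInt_Legendre_deriv_weighted b a) as Hba.
  rewrite (RInt_ext_R (fun x => Legendre_deriv b x * _)
             (fun x => Legendre_deriv a x * ((1 - x^2) * Legendre_deriv b x))) in Hba
    by (intros; ring).
  rewrite (RInt_ext_R (fun x => Legendre b x * _)
             (fun x => Legendre a x * Legendre b x)) in Hba by (intros; ring).
  assert (Hne : INR b * (INR b + 1) <> INR a * (INR a + 1)).
  { intro E. apply Hab. pose proof (pos_INR a). pose proof (pos_INR b).
    apply INR_eq. nra. }
  apply (Rmult_eq_reg_l (INR b * (INR b + 1) - INR a * (INR a + 1))); [|lra].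
  rewrite Rmult_0_r. lra.
Qed.

Lemma RInt_Legendre_SS g n : Cts g ->
  (INR n + 2) * RInt (fun x => Legendre (S (S n)) x * g x) (-1) 1
  = (2 * INR n + 3) * RInt (fun x => Legendre (S n) x * (x * g x)) (-1) 1
    - (INR n + 1) * RInt (fun x => Legendre n x * g x) (-1) 1.
Proof.
  intros Hg.
  rewrite <- (RInt_scal_Cts (INR n + 2) (fun x => Legendre (S (S n)) x * g x)) by cts.
  rewrite (RInt_ext_R _ (fun x => (2 * INR n + 3) * (Legendre (S n) x * (x * g x))
                                  - (INR n + 1) * (Legendre n x * g x))).
  - rewrite RInt_minus_Cts, !RInt_scal_Cts by cts. reflexivity.
  - intros x _.
    replace ((INR n + 2) * (Legendre (S (S n)) x * g x))
      with (((INR n + 2) * Legendre (S (S n)) x) * g x) by ring.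
    rewrite Legendre_Bonnet. ring.
Qed.

Section PolynomialDegree.
Variable g : R -> R.
Hypothesis Hg : Cts g.

Let moment j k := RInt (fun x => Legendre k x * (x ^ j * g x)) (-1) 1.

(* x L_k is a combination of L_(k-1) and L_(k+1), so powers of x can be traded for degree. *)
Lemma moment_lower N :
  (forall k, (k < N)%nat -> moment 0 k = 0) ->
  forall j k, (j + k < N)%nat -> moment j k = 0.
Proof.
  intros H0 j. induction j as [|j IH]; intros k Hjk; [apply H0; lia|].
  destruct k as [|n].
  - rewrite <- (IH 1%nat) by lia. unfold moment. apply RInt_ext_R. intros x _.
    rewrite Legendre_0, Legendre_1. simpl. ring.
  - pose proof (RInt_Legendre_SS (fun x => x ^ j * g x) n ltac:(cts)) as E; cbv beta in E.
    fold (moment j (S (S n))) (moment j n) in E.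
    rewrite IH, IH in E by lia.
    pose proof (pos_INR n).
    apply (Rmult_eq_reg_l (2 * INR n + 3)); [|lra].
    unfold moment. rewrite Rmult_0_r, (RInt_ext_R _ (fun x => Legendre (S n) x * (x * (x ^ j * g x))))
      by (intros; simpl; ring).
    lra.
Qed.

Lemma moment_raise N :
  (forall j, (j < N)%nat -> moment j 0 = 0) ->
  forall j k, (j + k < N)%nat -> moment j k = 0.
Proof.
  intros H0 j k. revert j. induction k as [| |n IH0 IH1] using nat_ind2; intros j Hjk.
  - apply H0. lia.
  - rewrite <- (H0 (S j)) by lia. unfold moment. apply RInt_ext_R. intros x _.
    rewrite Legendre_0, Legendre_1. simpl. ring.
  - pose proof (RInt_Legendre_SS (fun x => x ^ j * g x) n ltac:(cts)) as E; cbv beta in E.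
    rewrite (RInt_ext_R (fun x => Legendre (S n) x * (x * (x ^ j * g x)))
               (fun x => Legendre (S n) x * (x ^ S j * g x))) in E by (intros; simpl; ring).
    fold (moment j (S (S n))) (moment (S j) (S n)) (moment j n) in E.
    rewrite IH1, IH0 in E by lia.
    pose proof (pos_INR n).
    apply (Rmult_eq_reg_l (INR n + 2)); lra.
Qed.

End PolynomialDegree.

Lemma Legendre_triple_orthogonal k a b : (k + a < b)%nat ->
  RInt (fun x => Legendre k x * (Legendre a x * Legendre b x)) (-1) 1 = 0.
Proof.
  intros Hkab.
  assert (Hab : forall j, (j + a < b)%nat ->
            RInt (fun x => Legendre a x * (x ^ j * Legendre b x)) (-1) 1 = 0).
  { intros j Hj. apply (moment_lower (Legendre b) (Cts_Legendre b) b); [|lia].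
    intros k' Hk'. rewrite <- (Legendre_orthogonal k' b) by lia.
    apply RInt_ext_R. intros; simpl; ring. }
  transitivity (RInt (fun x => Legendre k x * (x ^ 0 * (Legendre a x * Legendre b x))) (-1) 1).
  { apply RInt_ext_R. intros; simpl; ring. }
  apply (moment_raise (fun x => Legendre a x * Legendre b x) ltac:(cts) (b - a)); [|lia].
  intros j Hj. rewrite <- (Hab j) by lia.
  apply RInt_ext_R. intros; rewrite Legendre_0; ring.
Qed.

Lemma Legendre_norm n : RInt (fun x => Legendre n x * Legendre n x) (-1) 1 = 2 / (2 * INR n + 1).
Proof.
  induction n as [| |n IH0 IH1] using nat_ind2.
  - rewrite (RInt_ext_R _ (fun _ => 1)) by (intros; rewrite Legendre_0; ring).
    rewrite RInt_const. unfold scal; simpl; unfold mult; simpl. field.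
  - rewrite (RInt_ext_R _ (fun x => x ^ 2)) by (intros; rewrite Legendre_1; ring).
    rewrite (is_RInt_unique (V := R_CompleteNormedModule) (fun x => x ^ 2) (-1) 1 (2 / 3)).
    + simpl. field.
    + replace (2 / 3) with (minus ((fun x => x ^ 3 / 3) 1) ((fun x => x ^ 3 / 3) (-1)))
        by (unfold minus, plus, opp; simpl; field).
      apply (is_RInt_derive (V := R_CompleteNormedModule) (fun x => x ^ 3 / 3)).
      * intros x _. auto_derive; [exact I | simpl; field].
      * intros x _. apply Cts_pow.
  - set (X := RInt (fun x => Legendre (S n) x * (x * Legendre (S (S n)) x)) (-1) 1).
    pose proof (RInt_Legendre_SS (Legendre (S (S n))) n (Cts_Legendre _)) as E1.
    pose proof (RInt_Legendre_SS (Legendre (S n)) (S n) (Cts_Legendre _)) as E2.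
    rewrite (Legendre_orthogonal n (S (S n))) in E1 by lia.
    rewrite (Legendre_orthogonal (S (S (S n))) (S n)) in E2 by lia.
    rewrite (RInt_ext_R (fun x => Legendre (S (S n)) x * (x * Legendre (S n) x))
               (fun x => Legendre (S n) x * (x * Legendre (S (S n)) x))) in E2
      by (intros; ring).
    fold X in E1, E2. rewrite IH1, S_INR in E2. rewrite Rmult_0_r in E1, E2.
    pose proof (pos_INR n).
    assert (HX : X = (INR n + 2) / (2 * INR n + 5) * (2 / (2 * INR n + 3))).
    { apply (Rmult_eq_reg_l (2 * INR n + 5)); [|lra].
      replace ((2 * INR n + 5) * X) with ((INR n + 1 + 1) * (2 / (2 * (INR n + 1) + 1)))
        by lra.
      field. lra. }
    apply (Rmult_eq_reg_l (INR n + 2)); [|lra].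
    rewrite E1, HX, !S_INR. field. lra.
Qed.

(* A discrete energy: it is nonincreasing in n and dominates (1 - x^2) L_n(x)^2. *)
Definition Legendre_energy n x : R :=
  Legendre n x ^ 2 + Legendre (S n) x ^ 2 - 2 * x * Legendre n x * Legendre (S n) x.

Lemma Legendre_energy_S n x : Legendre_energy (S n) x <= Legendre_energy n x.
Proof.
  pose proof (pos_INR n).
  assert (E : Legendre_energy n x - Legendre_energy (S n) x
              = (2 * INR n + 3) / (INR n + 2) ^ 2 * (Legendre n x - x * Legendre (S n) x) ^ 2).
  { unfold Legendre_energy. rewrite Legendre_SS. field. lra. }
  assert (0 <= (2 * INR n + 3) / (INR n + 2) ^ 2 * (Legendre n x - x * Legendre (S n) x) ^ 2).
  { apply Rmult_le_pos; [apply Rdiv_le_0_compat; [lra | apply pow_lt; lra] | apply pow2_ge_0]. }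
  lra.
Qed.

Lemma Legendre_energy_le n x : Legendre_energy n x <= 1 - x ^ 2.
Proof.
  induction n as [|n IH].
  - unfold Legendre_energy. rewrite Legendre_0, Legendre_1. lra.
  - pose proof (Legendre_energy_S n x). lra.
Qed.

Lemma Legendre_endpoint n x : x ^ 2 = 1 -> Legendre n x ^ 2 = 1.
Proof.
  intros Hx.
  assert (H : Legendre (S n) x = x * Legendre n x /\ Legendre n x ^ 2 = 1); [|apply H].
  induction n as [|n [IH1 IH2]].
  - rewrite Legendre_0, Legendre_1. lra.
  - pose proof (pos_INR n). rewrite Legendre_SS, IH1. split.
    + field_simplify; [|lra]. replace (x ^ 2) with 1 by lra. field. lra.
    + replace ((x * Legendre n x) ^ 2) with (x ^ 2 * Legendre n x ^ 2) by ring.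
      rewrite Hx, IH2. ring.
Qed.

Lemma Legendre_bound n x : -1 <= x <= 1 -> Rabs (Legendre n x) <= 1.
Proof.
  intros Hx. apply Rabs_le.
  assert (Legendre n x ^ 2 <= 1); [|nra].
  destruct (Req_dec (x ^ 2) 1) as [E|E]; [rewrite Legendre_endpoint; lra|].
  assert (Hpos : 0 < 1 - x ^ 2) by nra.
  pose proof (Legendre_energy_le n x) as H. unfold Legendre_energy in H.
  pose proof (pow2_ge_0 (Legendre (S n) x - x * Legendre n x)).
  apply (Rmult_le_reg_l (1 - x ^ 2)); nra.
Qed.

Lemma Series_shift_geometric_bound (a : nat -> R) C q N : 0 <= q < 1 ->
  (forall k, Rabs (a k) <= C * q ^ k) ->
  Rabs (Series (fun k => a (N + k)%nat)) <= C * q ^ N / (1 - q).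
Proof.
  intros Hq Ha.
  assert (Hgeom : is_series (fun k => C * q ^ N * q ^ k) (C * q ^ N / (1 - q))).
  { apply (is_series_scal_l (C * q ^ N) (fun k => q ^ k) (/ (1 - q))).
    apply is_series_geom. rewrite Rabs_right; lra. }
  assert (Hk : forall k, Rabs (a (N + k)%nat) <= C * q ^ N * q ^ k).
  { intro k. rewrite Rmult_assoc, <- pow_add. apply Ha. }
  assert (Habs : ex_series (fun k => Rabs (a (N + k)%nat))).
  { apply (ex_series_le (fun k => Rabs (a (N + k)%nat)) (fun k => C * q ^ N * q ^ k));
      [|eexists; exact Hgeom].
    intro k. rewrite Rabs_Rabsolu. apply Hk. }
  eapply Rle_trans; [apply Series_Rabs, Habs|].
  rewrite <- (is_series_unique _ _ Hgeom).
  apply Series_le; [|eexists; exact Hgeom].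
  intro k. split; [apply Rabs_pos | apply Hk].
Qed.

Fixpoint nu_partial (c : nat -> R) (N : nat) (x : R) : R :=
  match N with
  | O => 0
  | S k => nu_partial c k x + c k * Legendre k x
  end.

Lemma Cts_nu_partial c N : Cts (nu_partial c N).
Proof. induction N; simpl; [apply Cts_const|]. apply (Cts_plus (nu_partial c N)); cts. Qed.

(* The bound |L_k| <= 1 holds only on [-1, 1]; composing with the clamp makes the partial sums
   of nu converge uniformly on all of R, so nu o clamp is continuous, and it is nu on [-1, 1]. *)
Definition clamp (y : R) : R := (Rabs (y + 1) - Rabs (y - 1)) / 2.

Lemma clamp_range y : -1 <= clamp y <= 1.
Proof. unfold clamp, Rabs. repeat destruct Rcase_abs; lra. Qed.

Lemma clamp_id y : -1 <= y <= 1 -> clamp y = y.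
Proof. intros. unfold clamp, Rabs. repeat destruct Rcase_abs; lra. Qed.

Lemma Cts_clamp : Cts clamp.
Proof.
  intro y. unfold clamp.
  apply (continuous_mult (fun y => Rabs (y + 1) - Rabs (y - 1)) (fun _ => / 2));
    [|apply continuous_const].
  apply (continuous_minus (fun y => Rabs (y + 1)) (fun y => Rabs (y - 1)));
    apply continuous_Rabs_comp; revert y; cts.
Qed.

Definition Legendre_normalized k x : R := sqrt (INR k + / 2) * Legendre k x.

Lemma Cts_Legendre_normalized k : Cts (Legendre_normalized k).
Proof. unfold Legendre_normalized. cts. Qed.

Lemma Legendre_normalized_norm k :
  RInt (fun x => Legendre_normalized k x * Legendre_normalized k x) (-1) 1 = 1.
Proof.
  unfold Legendre_normalized.
  rewrite (RInt_ext_R _ (fun x => sqrt (INR k + / 2) ^ 2 * (Legendre k x * Legendre k x)))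
    by (intros; ring).
  rewrite RInt_scal_Cts, Legendre_norm by cts. pose proof (pos_INR k).
  rewrite <- Rsqr_pow2, Rsqr_sqrt by lra.
  replace (2 / (2 * INR k + 1)) with (/ (INR k + / 2)) by (field; lra).
  apply Rinv_r. lra.
Qed.

Lemma Derive_eta_BS m x : (1 <= m)%nat ->
  Derive (eta_BS m) x = - Legendre_normalized (m - 1) x.
Proof.
  intros Hm. apply is_derive_unique. unfold eta_BS, Legendre_normalized.
  replace (INR (m - 1) + / 2) with (INR m - / 2) by (rewrite minus_INR by lia; simpl; lra).
  replace (- (sqrt (INR m - / 2) * Legendre (m - 1) x))
    with (sqrt (INR m - / 2) * - Legendre (m - 1) x) by ring.
  apply (is_derive_scal (fun y => RInt (Legendre (m - 1)) y 1) x (sqrt (INR m - / 2))).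
  apply (is_derive_RInt' (V := R_CompleteNormedModule) (Legendre (m - 1)) _ x 1).
  - apply filter_forall. intro y. apply (RInt_correct (V := R_CompleteNormedModule)).
    apply ex_RInt_Cts, Cts_Legendre.
  - apply Cts_Legendre.
Qed.

Lemma abs_RInt_mult3_le (h u v : R -> R) a b M : a <= b -> Cts h -> Cts u -> Cts v ->
  (forall x, a <= x <= b -> Rabs (h x) <= M) ->
  Rabs (RInt (fun x => h x * u x * v x) a b)
  <= M / 2 * (RInt (fun x => u x * u x) a b + RInt (fun x => v x * v x) a b).
Proof.
  intros Hab Hh Hu Hv HM.
  assert (HM0 : 0 <= M) by (pose proof (HM a ltac:(lra)); pose proof (Rabs_pos (h a)); lra).
  eapply Rle_trans; [apply abs_RInt_le; [exact Hab | apply ex_RInt_Cts; cts]|].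
  rewrite <- (RInt_plus_Cts (fun x => u x * u x) (fun x => v x * v x)),
    <- (RInt_scal_Cts (M / 2)) by cts.
  apply RInt_le; [exact Hab | apply ex_RInt_Cts .. |].
  - intro x. apply continuous_Rabs_comp. revert x. cts.
  - cts.
  - intros x Hx. rewrite !Rabs_mult.
    pose proof (HM x ltac:(lra)). pose proof (Rabs_pos (h x)).
    pose proof (Rabs_pos (u x)). pose proof (Rabs_pos (v x)).
    assert (Rabs (u x) * Rabs (v x) <= (u x * u x + v x * v x) / 2).
    { pose proof (pow2_ge_0 (Rabs (u x) - Rabs (v x))).
      pose proof (pow2_abs (u x)). pose proof (pow2_abs (v x)). nra. }
    nra.
Qed.

Lemma RInt_nu_partial_orthogonal c d a b :
  (forall k, (k < d)%nat ->
     RInt (fun x => Legendre k x * (Legendre a x * Legendre b x)) (-1) 1 = 0) ->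
  RInt (fun x => nu_partial c d x * (Legendre a x * Legendre b x)) (-1) 1 = 0.
Proof.
  induction d as [|d IH]; intros Hk; simpl.
  - rewrite RInt_scal_Cts by cts. ring.
  - rewrite (RInt_ext_R _ (fun x => nu_partial c d x * (Legendre a x * Legendre b x)
                                     + c d * (Legendre d x * (Legendre a x * Legendre b x))))
      by (intros; ring).
    pose proof (Cts_nu_partial c d).
    rewrite RInt_plus_Cts, RInt_scal_Cts, IH, Hk by (cts || auto). ring.
Qed.

Section ExponentialDecay.
Variables (q Ceta : R) (c : nat -> R).
Hypothesis Hq : 0 < q < 1.
Hypothesis Hc : forall k, Rabs (c k) <= Ceta * q ^ k.

Lemma nu_tail_bound x N : -1 <= x <= 1 ->
  Rabs (nu_fun c x - nu_partial c N x) <= Ceta * q ^ N / (1 - q).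
Proof.
  intros Hx.
  set (a := fun k => c k * Legendre k x).
  assert (Ha : forall k, Rabs (a k) <= Ceta * q ^ k).
  { intro k. unfold a. rewrite Rabs_mult.
    pose proof (Legendre_bound k x Hx). pose proof (Hc k).
    pose proof (Rabs_pos (c k)). pose proof (Rabs_pos (Legendre k x)). nra. }
  destruct N as [|N].
  - simpl nu_partial. rewrite Rminus_0_r. unfold nu_fun. fold a.
    rewrite (Series_ext a (fun k => a (0 + k)%nat)) by reflexivity.
    apply Series_shift_geometric_bound; [lra | exact Ha].
  - assert (Hsum : forall M, nu_partial c (S M) x = sum_f_R0 a M).
    { induction M as [|M IH]; [unfold a; simpl; ring|].
      change (nu_partial c (S M) x + a (S M) = sum_f_R0 a M + a (S M)). now rewrite IH. }
    assert (Hex : ex_series a).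
    { apply ex_series_Rabs.
      apply (ex_series_le (K := R_AbsRing) (V := R_CompleteNormedModule) _ (fun k => Ceta * q ^ k)).
      - intro k. rewrite Rabs_Rabsolu. apply Ha.
      - apply (ex_series_scal_l (V := R_NormedModule) Ceta (fun k => q ^ k)).
        apply ex_series_geom. rewrite Rabs_right; lra. }
    unfold nu_fun. fold a. rewrite (Series_incr_n a (S N)), Hsum by (lia || exact Hex).
    simpl pred. replace (_ + _ - _) with (Series (fun k => a (S N + k)%nat)) by ring.
    apply Series_shift_geometric_bound; [lra | exact Ha].
Qed.

Lemma nu_partial_cvu eps : 0 < eps ->
  exists N, forall n x, (N <= n)%nat -> -1 <= x <= 1 -> Rabs (nu_fun c x - nu_partial c n x) < eps.
Proof.
  intros Heps.
  assert (HCeta : 0 <= Ceta) by (pose proof (Hc 0); pose proof (Rabs_pos (c 0)); simpl in *; lra).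
  assert (Hd : 0 < eps * (1 - q) / (Ceta + 1))
    by (apply Rdiv_lt_0_compat; [apply Rmult_lt_0_compat|]; lra).
  destruct (pow_lt_1_zero q ltac:(rewrite Rabs_right; lra) _ Hd) as [N HN].
  exists N. intros n x Hn Hx.
  eapply Rle_lt_trans; [apply nu_tail_bound; exact Hx|].
  specialize (HN n Hn). rewrite Rabs_right in HN by (apply Rle_ge, pow_le; lra).
  apply (Rmult_lt_reg_r ((1 - q) * (Ceta + 1))); [apply Rmult_lt_0_compat; lra|].
  replace (Ceta * q ^ n / (1 - q) * ((1 - q) * (Ceta + 1))) with (Ceta * q ^ n * (Ceta + 1))
    by (field; lra).
  replace (eps * ((1 - q) * (Ceta + 1))) with (eps * (1 - q) / (Ceta + 1) * (Ceta + 1) ^ 2)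
    by (field; lra).
  pose proof (pow_le q n ltac:(lra)).
  nra.
Qed.

Lemma Cts_nu_clamp : Cts (fun y => nu_fun c (clamp y)).
Proof.
  intro y. apply continuity_pt_filterlim.
  apply (CVU_continuity (fun n y => nu_partial c n (clamp y)) _ y (mkposreal 1 Rlt_0_1)).
  - intros eps Heps. destruct (nu_partial_cvu eps Heps) as [N HN].
    exists N. intros n z Hn _. apply HN; [exact Hn | apply clamp_range].
  - intros n z _. apply continuity_pt_filterlim.
    apply (continuous_comp clamp (nu_partial c n)); [apply Cts_clamp | apply Cts_nu_partial].
  - apply Boule_center.
Qed.

(* Below degree d the series does not see L_a L_b, so only its tail after d terms counts. *)
Lemma RInt_nu_Legendre_normalized_bound a b d :
  (forall k, (k < d)%nat ->
     RInt (fun x => Legendre k x * (Legendre a x * Legendre b x)) (-1) 1 = 0) ->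
  Rabs (RInt (fun x => nu_fun c (clamp x) * Legendre_normalized a x * Legendre_normalized b x)
          (-1) 1)
  <= Ceta * q ^ d / (1 - q).
Proof.
  intros Hortho.
  pose proof (Cts_Legendre_normalized a) as HPa. pose proof (Cts_Legendre_normalized b) as HPb.
  pose proof (Cts_nu_partial c d).
  set (tail := fun x => nu_fun c (clamp x) - nu_partial c d x).
  assert (Htail : Cts tail)
    by (pose proof Cts_nu_clamp; unfold tail; cts).
  rewrite (RInt_ext_R _ (fun x => tail x * Legendre_normalized a x * Legendre_normalized b x
      + sqrt (INR a + / 2) * sqrt (INR b + / 2)
        * (nu_partial c d x * (Legendre a x * Legendre b x))))
    by (intros; unfold tail, Legendre_normalized; ring).
  rewrite RInt_plus_Cts, RInt_scal_Cts by cts.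
  rewrite RInt_nu_partial_orthogonal, Rmult_0_r, Rplus_0_r by exact Hortho.
  assert (Htail_bound : forall x, -1 <= x <= 1 -> Rabs (tail x) <= Ceta * q ^ d / (1 - q)).
  { intros x Hx. unfold tail. rewrite clamp_id by exact Hx. apply nu_tail_bound; assumption. }
  pose proof (abs_RInt_mult3_le tail _ _ (-1) 1 _ ltac:(lra) Htail HPa HPb Htail_bound) as Hle.
  rewrite !Legendre_normalized_norm in Hle. lra.
Qed.

End ExponentialDecay.

Lemma exp_mult_INR t k : exp (t * INR k) = exp t ^ k.
Proof.
  induction k as [|k IH]; [simpl; rewrite Rmult_0_r; apply exp_0|].
  rewrite S_INR, Rmult_plus_distr_l, Rmult_1_r, exp_plus, IH. simpl. ring.
Qed.

Lemma a1_comm c m n : a1 c m n = a1 c n m.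
Proof. unfold a1. apply RInt_ext_R. intros; ring. Qed.

Lemma a1_Legendre_normalized c m n : (1 <= m)%nat -> (1 <= n)%nat ->
  a1 c m n = RInt (fun x => nu_fun c (clamp x) * Legendre_normalized (m - 1) x
                            * Legendre_normalized (n - 1) x) (-1) 1.
Proof.
  intros Hm Hn. unfold a1. apply RInt_ext_R. intros x Hx.
  rewrite Rmin_left, Rmax_right in Hx by lra.
  rewrite !Derive_eta_BS, clamp_id by (lra || assumption). ring.
Qed.

Lemma a1_bound_exp_decay q Ceta c m n : 0 < q < 1 ->
  (forall k, Rabs (c k) <= Ceta * q ^ k) -> (1 <= m <= n)%nat ->
  Rabs (a1 c m n) <= Ceta * q ^ (n - m) / (1 - q).
Proof.
  intros Hq Hc Hmn.
  rewrite a1_Legendre_normalized by lia.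
  apply RInt_nu_Legendre_normalized_bound; [exact Hq | exact Hc |].
  intros k Hk. apply Legendre_triple_orthogonal. lia.
Qed.

Theorem mainTheorem2 :
  forall (eta : R), 0 < eta ->
  forall (Ceta : R), 0 < Ceta ->
  exists C : R, 0 < C /\
    forall c : nat -> R,
      (forall k : nat, Rabs (c k) <= Ceta * exp (- eta * INR k)) ->
      forall m n : nat, (2 <= m)%nat -> (2 <= n)%nat ->
        Rabs (a1 c m n) <= C * exp (- eta * Rabs (INR n - INR m)).
Proof.
  intros eta Heta Ceta HC.
  set (q := exp (- eta)).
  assert (Hq : 0 < q < 1) by (split; [apply exp_pos | rewrite <- exp_0; apply exp_increasing; lra]).
  exists (Ceta / (1 - q)). split; [apply Rdiv_lt_0_compat; lra|].
  intros c Hc m n Hm Hn.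
  assert (Hcq : forall k, Rabs (c k) <= Ceta * q ^ k)
    by (intro k; unfold q; rewrite <- exp_mult_INR; apply Hc).
  assert (Hle : forall m n, (1 <= m <= n)%nat ->
            Rabs (a1 c m n) <= Ceta / (1 - q) * exp (- eta * Rabs (INR n - INR m))).
  { intros m' n' Hmn.
    rewrite <- minus_INR by lia.
    rewrite (Rabs_right (INR (n' - m'))), exp_mult_INR by apply Rle_ge, pos_INR.
    fold q. replace (Ceta / (1 - q) * q ^ (n' - m')) with (Ceta * q ^ (n' - m') / (1 - q))
      by (field; lra).
    apply a1_bound_exp_decay; assumption. }
  destruct (Nat.le_gt_cases m n).
  - apply Hle. lia.
  - rewrite a1_comm, Rabs_minus_sym. apply Hle. lia.
Qed.
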